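(* Let $t\ge0$ and $i\ge -t$ be integers. Let $\Phi(z)=\sum_{n\ge0}c_nz^n$, where $c_n$ is the number of Deutsch paths of $n$ steps from $(0,0)$ to $(n,i)$ that never go below level $-t$. Let $v=v(z)$ be the power series with $v(0)=0$ satisfying $z=\frac{v}{1+v+v^2}$. Then $$\Phi(z)=\frac{(1+v)^{-i-2}(1-v^{i+t+1})\,v\,(1+v+v^2)}{1-v}\quad\text{for } i<0,$$ $$\Phi(z)=\frac{v^{i}(1-v^{t+2})(1+v+v^2)}{(1-v)(1+v)^{i+2}}\quad\text{for } i\ge0.$$
   Context: A Deutsch path is a lattice path whose steps are up-steps $(1,1)$ and down-steps $(1,-k)$ for any integer $k\ge1$. The series $v$ is given explicitly by $v=\frac{1-z-\sqrt{1-2z-3z^2}}{2z}$. *)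

From mathcomp Require Import all_boot all_order all_algebra.
Set Implicit Arguments. Unset Strict Implicit. Unset Printing Implicit Defensive.
Import Order.TTheory GRing.Theory Num.Theory.
Local Open Scope ring_scope.

(* A path with n steps is encoded by the list of the vertical displacements
   of its steps: an up-step (1,1) is encoded by 1, a down-step (1,-k),
   k >= 1, by -k. *)
Definition deutsch_step (s : int) : bool := (s == 1) || (s <= -1).

Definition height (p : seq int) (k : nat) : int := \sum_(x <- take k p) x.

Definition deutsch_path (t : nat) (i : int) (n : nat) (p : seq int) : bool :=
  [&& size p == n, all deutsch_step p, height p n == i &
      [forall k : 'I_n.+1, - (t%:Z) <= height p k]].

Definition fps := nat -> rat.
Definition fconst (c : rat) : fps := fun n => if n == 0%N then c else 0.
Definition fone : fps := fconst 1.
Definition fX : fps := fun n => if n == 1%N then 1 else 0.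
Definition fadd (f g : fps) : fps := fun n => f n + g n.
Definition fsub (f g : fps) : fps := fun n => f n - g n.
Definition fmul (f g : fps) : fps :=
  fun n => \sum_(k < n.+1) f k * g (n - k)%N.
Fixpoint fpow (f : fps) (m : nat) : fps :=
  if m is m'.+1 then fmul f (fpow f m') else fone.

(* multiplicative inverse of a series with nonzero constant term:
   g 0 = 1/f 0,  g n = -(1/f 0) * sum_{k<n} f (n-k) g k *)
Fixpoint finv_aux (f : fps) (n : nat) : seq rat :=
  if n is n'.+1 then
    let s := finv_aux f n' in
    rcons s (- (f 0%N)^-1 * \sum_(k < n'.+1) f (n'.+1 - k)%N * nth 0 s k)
  else [:: (f 0%N)^-1].
Definition finv (f : fps) : fps := fun n => nth 0 (finv_aux f n) n.

Definition fdiv (f g : fps) : fps := fmul f (finv g).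

Definition fpowz (f : fps) (z : int) : fps :=
  match z with
  | Posz m => fpow f m
  | Negz m => fpow (finv f) m.+1
  end.

(* Measure heights from the floor: level k stands for height k - t.  Removing
   the last step of a path shows that the number a_n(k) of admissible paths of
   length n ending at level k satisfies
     a_{n+1}(k) - a_{n+1}(k+1) = a_n(k-1) - a_n(k) + a_n(k+1),
   with a_0(k) = [k = t] and a_n(k) = 0 for k > t + n; these data determine
   a_n(k).  With u = 1/(1+v), the roots of (1+v)^2 r^2 - (1+v)^2 r + v = 0 are
   u and v u, and gluing geometric sequences in these roots at level t gives
   B_k with
     w (B_k - B_{k+1}) - v (B_{k-1} - B_k + B_{k+1})
       = (1+v)^2 (1-v) ([k = t] - [k+1 = t]),      w = 1 + v + v^2.
   As z = v / w, the series A_k = u^2 w B_k / (1 - v) satisfy the recurrence of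
   a_n(k) coefficientwise, hence A_k = sum_n a_n(k) z^n, and k = i + t gives
   the formula. *)

From HB Require Import structures.
From mathcomp Require Import all_boot all_order all_algebra.
From mathcomp Require Import boolp.
From mathcomp Require Import ring lra zify.
Set Implicit Arguments. Unset Strict Implicit. Unset Printing Implicit Defensive.
Import Order.TTheory GRing.Theory Num.Theory.
Local Open Scope ring_scope.

HB.instance Definition _ := gen_eqMixin fps.
HB.instance Definition _ := gen_choiceMixin fps.

Definition fzero : fps := fun _ => 0.
Definition fopp (f : fps) : fps := fun n => - f n.

Lemma fpsP (f g : fps) : (forall n, f n = g n) -> f = g.
Proof. by move=> fg; apply: funext. Qed.

Fact faddA : associative fadd.
Proof. by move=> f g h; apply: fpsP => n; apply: addrA. Qed.
Fact faddC : commutative fadd.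
Proof. by move=> f g; apply: fpsP => n; apply: addrC. Qed.
Fact add0f : left_id fzero fadd.
Proof. by move=> f; apply: fpsP => n; apply: add0r. Qed.
Fact addNf : left_inverse fzero fopp fadd.
Proof. by move=> f; apply: fpsP => n; apply: addNr. Qed.

HB.instance Definition _ := GRing.isZmodule.Build fps faddA faddC add0f addNf.

Lemma fmul_rev (f g : fps) n : fmul f g n = \sum_(k < n.+1) f (n - k)%N * g k.
Proof.
rewrite /fmul (reindex_inj rev_ord_inj) /=.
by apply: eq_bigr => k _; rewrite (sub_ordK k).
Qed.

Fact fmulC : commutative fmul.
Proof.
move=> f g; apply: fpsP => n; rewrite fmul_rev.
by apply: eq_bigr => k _; rewrite mulrC.
Qed.

Fact fmulA : associative fmul.
Proof.
move=> f g h; apply: fpsP => n; rewrite {1}/fmul [RHS]fmul_rev.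
pose a j k := f j * (g (n - j - k)%N * h k).
transitivity (\sum_(j < n.+1) \sum_(k < n.+1 | (k <= n - j)%N) a j k).
  apply: eq_bigr => /= j _; rewrite fmul_rev big_distrr /=.
  by rewrite (big_ord_narrow_leq (leq_subr _ _)).
rewrite (exchange_big_dep predT) //=; apply: eq_bigr => k _.
transitivity (\sum_(j < n.+1 | (j <= n - k)%N) a j k).
  by apply: eq_bigl => j; have := ltn_ord j; have := ltn_ord k; lia.
rewrite (big_ord_narrow_leq (leq_subr _ _)) /fmul big_distrl /=.
by apply: eq_bigr => j _; rewrite /a -!subnDA addnC mulrA.
Qed.

Fact mul1f : left_id fone fmul.
Proof.
move=> f; apply: fpsP => n; rewrite /fmul big_ord_recl subn0 mul1r.
by rewrite big1 ?addr0 // => k _; rewrite mul0r.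
Qed.

Fact fmulDl : left_distributive fmul fadd.
Proof.
move=> f g h; apply: fpsP => n; rewrite /fmul /fadd -big_split /=.
by apply: eq_bigr => k _; rewrite mulrDl.
Qed.

Fact fone_neq0 : fone != 0.
Proof. by apply/eqP => /(congr1 (fun f : fps => f 0%N))/eqP; rewrite oner_eq0. Qed.

HB.instance Definition _ :=
  GRing.Zmodule_isComNzRing.Build fps fmulA fmulC mul1f fmulDl fone_neq0.

Lemma fmulE (f g : fps) : fmul f g = f * g. Proof. by []. Qed.
Lemma fpowE (f : fps) m : fpow f m = f ^+ m.
Proof. by elim: m => //= m ->; rewrite exprS. Qed.
Lemma fpowz_nat (f : fps) (m : nat) : fpowz f m = f ^+ m.
Proof. exact: fpowE. Qed.

Lemma coefD (f g : fps) n : (f + g) n = f n + g n. Proof. by []. Qed.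
Lemma coefN (f : fps) n : (- f) n = - f n. Proof. by []. Qed.
Lemma coefB (f g : fps) n : (f - g) n = f n - g n. Proof. by []. Qed.
Lemma coefM (f g : fps) n : (f * g) n = \sum_(k < n.+1) f k * g (n - k)%N.
Proof. by []. Qed.
Lemma coef1 n : (1 : fps) n = (n == 0%N)%:R. Proof. by case: n. Qed.

Lemma coef0M (f g : fps) : (f * g) 0%N = f 0%N * g 0%N.
Proof. by rewrite coefM big_ord_recl big_ord0 addr0. Qed.

Lemma coef0X (f : fps) m : (f ^+ m) 0%N = f 0%N ^+ m.
Proof. by elim: m => [|m IH]; rewrite ?expr0 // !exprS coef0M IH. Qed.

Lemma coef_natS m n : (m%:R : fps) n.+1 = 0.
Proof. by elim: m => // m IH; rewrite mulrS coefD IH coef1 addr0. Qed.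

Lemma coefXM (f : fps) n : (fX * f) n.+1 = f n.
Proof.
rewrite coefM !big_ord_recl /fX /= mul0r add0r subn1 mul1r.
by rewrite big1 ?addr0 // => k _; rewrite mul0r.
Qed.

Lemma coefM_lt (f g : fps) a n :
  (forall j, (j < a)%N -> g j = 0) -> (n < a)%N -> (f * g) n = 0.
Proof.
move=> g0 na; rewrite coefM big1 // => k _; rewrite g0 ?mulr0 //.
by have := ltn_ord k; lia.
Qed.

Lemma coefX_lt (f : fps) m n : f 0%N = 0 -> (n < m)%N -> (f ^+ m) n = 0.
Proof.
move=> f0; elim: m n => // m IH n nm; rewrite exprS coefM big1 // => -[[|k] kn] _.
  by rewrite f0 mul0r.
by rewrite IH ?mulr0 //=; lia.
Qed.

Lemma size_finv_aux (f : fps) n : size (finv_aux f n) = n.+1.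
Proof. by elim: n => //= n IH; rewrite size_rcons IH. Qed.

Lemma nth_finv_aux (f : fps) n k : (k <= n)%N -> nth 0 (finv_aux f n) k = finv f k.
Proof.
elim: n => [|n IH]; first by rewrite leqn0 => /eqP ->.
rewrite leq_eqVlt => /orP[/eqP -> //|kn].
by rewrite /= nth_rcons size_finv_aux kn IH.
Qed.

Lemma finvS (f : fps) n :
  finv f n.+1 = - (f 0%N)^-1 * \sum_(k < n.+1) f (n.+1 - k)%N * finv f k.
Proof.
rewrite /finv /= nth_rcons size_finv_aux ltnn eqxx; congr (_ * _).
by apply: eq_bigr => k _; rewrite nth_finv_aux // -ltnS.
Qed.

Lemma mul_finvf (f : fps) : f 0%N != 0 -> finv f * f = 1.
Proof.
move=> f0; apply: fpsP => -[|n]; first by rewrite coef0M mulVf.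
rewrite coefM big_ord_recr subnn finvS coef1 /=.
under eq_bigr do rewrite mulrC.
by move: (f 0%N) f0 => a a0; field.
Qed.

Lemma finv_uniq (f g : fps) : f 0%N != 0 -> g * f = 1 -> g = finv f.
Proof. by move=> f0 gf; rewrite -[g]mulr1 -(mul_finvf f0) mulrCA gf mulr1. Qed.

Lemma finvX (f : fps) m : f 0%N != 0 -> finv (f ^+ m) = finv f ^+ m.
Proof.
move=> f0; symmetry; apply: finv_uniq; first by rewrite coef0X expf_neq0.
by rewrite -exprMn mul_finvf // expr1n.
Qed.

Lemma fpowzB (f : fps) m n : f 0%N != 0 -> fpowz f (m%:Z - n%:Z) = f ^+ m * finv f ^+ n.
Proof.
move=> f0; have fVfX k : f ^+ k * finv f ^+ k = 1 by rewrite -exprMn mulrC mul_finvf // expr1n.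
have [nm|mn] := leqP n m.
  have -> : m%:Z - n%:Z = (m - n)%N by lia.
  by rewrite fpowz_nat -(subnK nm) exprD -mulrA fVfX mulr1 addnK.
have -> : m%:Z - n%:Z = Negz (n - m).-1 by lia.
rewrite /= fmulE fpowE -exprS prednK ?subn_gt0 //.
by rewrite -{2}(subnK (ltnW mn)) exprD mulrCA fVfX mulr1.
Qed.

Lemma finvM (f g : fps) : f 0%N != 0 -> g 0%N != 0 -> finv (f * g) = finv f * finv g.
Proof.
move=> f0 g0; symmetry; apply: finv_uniq; first by rewrite coef0M mulf_neq0.
by rewrite mulrACA !mul_finvf // mulr1.
Qed.

Definition lag (V : nmodType) (f : nat -> V) (k : nat) : V :=
  if k is k'.+1 then f k' else 0.

Definition scaled_floor_gf (R : pzRingType) (t : nat) (v u : R) (k : nat) : R :=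
  if (t <= k)%N then (v * u) ^+ (k - t) * (1 - v ^+ t.+2)
  else (1 + v) ^+ (t - k) * v * (1 - v ^+ k.+1).

Section ScaledFloorGf.
Variables (R : comPzRingType) (t : nat) (v u : R).
Hypothesis vu : u * (1 + v) = 1.
Local Notation B := (scaled_floor_gf t v u).

Lemma eq_mod_unit (a b q : R) : a - b = (1 - u * (1 + v)) * q -> a = b.
Proof. by rewrite vu subrr mul0r => /eqP; rewrite subr_eq0 => /eqP. Qed.

Lemma scaled_floor_gf_high k :
  (t <= k)%N -> B k = (v * u) ^+ (k - t) * (1 - v ^+ t.+2).
Proof. by rewrite /scaled_floor_gf => ->. Qed.

Lemma scaled_floor_gf_low k :
  (k < t)%N -> B k = (1 + v) ^+ (t - k) * v * (1 - v ^+ k.+1).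
Proof. by move=> kt; rewrite /scaled_floor_gf leqNgt kt. Qed.

Lemma lag_scaled_floor_gf k :
  (k <= t)%N -> lag B k = (1 + v) ^+ (t - k).+1 * v * (1 - v ^+ k).
Proof.
case: k => [|k] kt /=; first by rewrite expr0 subrr mulr0.
by rewrite scaled_floor_gf_low // subnSK.
Qed.

Lemma scaled_floor_gf_rec k :
  (1 + v + v ^+ 2) * (B k - B k.+1) - v * (lag B k - B k + B k.+1) =
  ((k == t)%:R - (k.+1 == t)%:R) * (1 + v) ^+ 2 * (1 - v).
Proof.
have [tk|kt|<-] := ltngtP t k.
- case: k tk => // k tk.
  have tk1 : (t <= k.+1)%N by lia.
  have tk2 : (t <= k.+2)%N by lia.
  rewrite [lag _ _]/= !scaled_floor_gf_high //.
  rewrite (@gtn_eqF t k.+2) //.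
  have -> : (k.+1 - t = (k - t).+1)%N by lia.
  have -> : (k.+2 - t = (k - t).+2)%N by lia.
  move: (k - t)%N => d.
  apply: (@eq_mod_unit _ _ ((1 - v ^+ t.+2) * (v * u) ^+ d * v *
                           (v * (u * (1 + v) + 1) - (1 + v)))).
  by rewrite /= !exprS; ring.
- rewrite lag_scaled_floor_gf ?(ltnW kt) // scaled_floor_gf_low //.
  have [kt1|kt1] := eqVneq k.+1 t.
  + rewrite scaled_floor_gf_high -?kt1 // subnn subSnn.
    by rewrite /= !exprS; ring.
  + rewrite scaled_floor_gf_low ?(negbTE kt1); last by lia.
    have -> : (t - k = (t - k.+2).+2)%N by lia.
    have -> : (t - k.+1 = (t - k.+2).+1)%N by lia.
    by rewrite /= !exprS; ring.
- rewrite lag_scaled_floor_gf // !scaled_floor_gf_high // subnn subSnn.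
  apply: (@eq_mod_unit _ _ ((1 + v) * (1 - v ^+ t.+2) * v)).
  by rewrite gtn_eqF //= !exprS; ring.
Qed.
End ScaledFloorGf.

Definition end_height (p : seq int) : int := \sum_(x <- p) x.

Lemma end_height_rcons p s : end_height (rcons p s) = end_height p + s.
Proof. by rewrite /end_height -cats1 big_cat big_seq1. Qed.

Lemma height_size p : height p (size p) = end_height p.
Proof. by rewrite /height take_size. Qed.

Lemma height_rcons p s k : (k <= size p)%N -> height (rcons p s) k = height p k.
Proof. by move=> kp; rewrite /height -cats1 takel_cat. Qed.

Lemma end_height_cons s p : end_height (s :: p) = s + end_height p.
Proof. by rewrite /end_height big_cons. Qed.

Lemma end_height_le_size p : all deutsch_step p -> end_height p <= (size p)%:Z.
Proof.
elim: p => [|s p IH] /=; first by rewrite /end_height big_nil.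
by case/andP => /orP[/eqP->|s_neg] /IH; rewrite end_height_cons; lia.
Qed.

Section FloorPaths.
Variable t : nat.

Definition floor_path (n : nat) (p : seq int) : bool :=
  [&& size p == n, all deutsch_step p & [forall k : 'I_n.+1, - (t%:Z) <= height p k]].

Definition next_steps (p : seq int) : seq int :=
  1 :: [seq - (j.+1)%:Z | j <- iota 0 (absz (end_height p + t%:Z))].

Fixpoint floor_paths (n : nat) : seq (seq int) :=
  if n is n'.+1 then [seq rcons p s | p <- floor_paths n', s <- next_steps p]
  else [:: [::]].

Lemma floor_path_end n p : floor_path n p -> - (t%:Z) <= end_height p.
Proof.
by case/and3P => /eqP <- _ /forallP /(_ ord_max); rewrite height_size.
Qed.

Lemma mem_next_steps p s : - (t%:Z) <= end_height p ->
  (s \in next_steps p) = (s == 1) || ((s <= -1) && (- (t%:Z) <= end_height p + s)).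
Proof.
move=> hp; rewrite inE; congr (_ || _); apply/mapP/idP => [[j]|/andP[s1 s2]].
  by rewrite mem_iota add0n => jlt ->; apply/andP; split; lia.
by exists (absz (- s - 1)); [rewrite mem_iota add0n|]; lia.
Qed.

Lemma forall_above_floor_rcons n p s : size p = n ->
  [forall k : 'I_n.+2, - (t%:Z) <= height (rcons p s) k] =
  [forall k : 'I_n.+1, - (t%:Z) <= height p k] && (- (t%:Z) <= end_height p + s).
Proof.
move=> sz; have szS : size (rcons p s) = n.+1 by rewrite size_rcons sz.
apply/forallP/andP => [H|[/forallP H1 H2] k].
  split; last by have := H ord_max; rewrite -szS height_size end_height_rcons.
  apply/forallP => k; have kp : (k <= size p)%N by rewrite sz -ltnS.
  by have := H (widen_ord (leqnSn _) k); rewrite height_rcons.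
have [kn|kn] := leqP k n; first by rewrite height_rcons ?sz //; exact: (H1 (Ordinal _)).
have -> : nat_of_ord k = size (rcons p s) by have := ltn_ord k; lia.
by rewrite height_size end_height_rcons.
Qed.

Lemma floor_path_rcons n p s : floor_path n.+1 (rcons p s) =
  floor_path n p && ((s == 1) || ((s <= -1) && (- (t%:Z) <= end_height p + s))).
Proof.
have [sz|nsz] := eqVneq (size p) n; last first.
  by rewrite /floor_path size_rcons eqSS (negbTE nsz).
apply/idP/andP.
  rewrite /floor_path size_rcons sz !eqxx all_rcons forall_above_floor_rcons //=.
  case/and3P => /andP[step steps] above end_s; split; first by rewrite steps above.
  by case/orP: step => [->//|s_neg]; rewrite s_neg end_s orbT.
case=> fp step; have hp := floor_path_end fp; move: fp.
rewrite /floor_path size_rcons sz eqxx all_rcons forall_above_floor_rcons //= => /andP[-> ->].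
rewrite andbT /deutsch_step.
by case/orP: step => [/eqP->|/andP[-> ->]]; rewrite ?eqxx ?orbT //=; lia.
Qed.

Lemma mem_floor_paths n p : (p \in floor_paths n) = floor_path n p.
Proof.
elim: n p => [|n IH] p.
  rewrite inE /floor_path; case: p => //=.
  by symmetry; apply/forallP => k; rewrite /height big_nil oppr_le0.
apply/allpairsPdep/idP => [[q [s [qin sin ->]]]|].
  by rewrite IH in qin; rewrite floor_path_rcons qin -mem_next_steps ?(floor_path_end qin).
case/lastP: p => [//|q s]; rewrite floor_path_rcons => /andP[fq step].
by exists q, s; rewrite IH mem_next_steps ?(floor_path_end fq).
Qed.

Lemma uniq_floor_paths n : uniq (floor_paths n).
Proof.
elim: n => // n IH; apply: allpairs_uniq_dep => //.
  move=> q _ /=; rewrite map_inj_uniq ?iota_uniq ?andbT; last by move=> a b; lia.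
  by apply/mapP => -[j _]; lia.
move=> [p s] [q r] _ _ /= prq.
have szpq : size p = size q by have := congr1 size prq; rewrite !size_rcons => -[].
by move: prq; rewrite -!cats1 => /eqP; rewrite eqseq_cat // => /andP[/eqP-> /eqP[->]].
Qed.
End FloorPaths.

Definition floor_rec (f : nat -> nat -> rat) : Prop :=
  forall n k, f n.+1 k + f n k = f n.+1 k.+1 + lag (f n) k + f n k.+1.

Lemma floor_rec_uniq (b : nat) (f g : nat -> nat -> rat) :
  floor_rec f -> floor_rec g -> f 0%N =1 g 0%N ->
  (forall n k, (b + n < k)%N -> f n k = 0) ->
  (forall n k, (b + n < k)%N -> g n k = 0) ->
  forall n k, f n k = g n k.
Proof.
move=> frec grec fg0 f_gt g_gt; elim=> // n IH.
have down : forall d k, (b + n.+1 < k + d)%N -> f n.+1 k = g n.+1 k.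
  elim=> [|d IHd] k bkd; first by rewrite f_gt ?g_gt //; lia.
  have lag_fg : lag (f n) k = lag (g n) k by case: k {bkd}.
  have := frec n k; rewrite !IH lag_fg (IHd k.+1); last by lia.
  by rewrite -grec => /addIr.
by move=> k; apply: (down (b + n.+2)%N); lia.
Qed.

Lemma count_gt_split (T : Type) (h : T -> int) (s : seq T) (x : int) :
  count (fun p => x < h p) s =
  (count (fun p => h p == (x + 1)%R) s + count (fun p => (x + 1 < h p)%R) s)%N.
Proof.
rewrite -count_predUI addnC (@eq_count _ (predI _ _) pred0); last first.
  by move=> p /=; apply/andP => -[/eqP-> ]; rewrite ltxx.
by rewrite count_pred0; apply: eq_count => p /=; apply/idP/orP => [|[/eqP->|]]; lia.
Qed.

Section FloorCount.
Variable t : nat.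
Local Notation P := (floor_paths t).

Lemma floor_paths_above n : all (fun p => - (t%:Z) <= end_height p) (P n).
Proof. by apply/allP => p; rewrite mem_floor_paths => /floor_path_end. Qed.

Lemma count_next_steps p x : - (t%:Z) <= end_height p -> - (t%:Z) <= x ->
  count (fun s => end_height p + s == x) (next_steps t p) =
  ((end_height p == (x - 1)%R) + (x < end_height p)%R)%N.
Proof.
move=> hp hx; rewrite /next_steps /= count_map.
have -> : (end_height p + 1 == x) = (end_height p == x - 1) by apply/eqP/eqP; lia.
congr (_ + _)%N; have [xp|px] := ltP x (end_height p).
  rewrite (@eq_count _ _ (pred1 (absz (end_height p - x - 1)%R))).
    by rewrite count_uniq_mem ?iota_uniq // mem_iota add0n; lia.
  by move=> j /=; apply/eqP/eqP; lia.
by rewrite (@eq_count _ _ pred0) ?count_pred0 // => j /=; apply/eqP; lia.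
Qed.

Lemma count_floor_pathsS n x : - (t%:Z) <= x ->
  count (fun p => end_height p == x) (P n.+1) =
  (count (fun p => end_height p == (x - 1)%R) (P n) +
   count (fun p => (x < end_height p)%R) (P n))%N.
Proof.
move=> hx; have := floor_paths_above n.
change (P n.+1) with [seq rcons p s | p <- P n, s <- next_steps t p].
elim: (P n) => // q L IH /andP[hq hL].
rewrite allpairs_cons count_cat count_map IH //.
have -> : count (preim (rcons q) (fun p => end_height p == x)) (next_steps t q) =
          count (fun s => end_height q + s == x) (next_steps t q).
  by apply: eq_count => s; rewrite /= end_height_rcons.
by rewrite count_next_steps //= addnACA.
Qed.

Definition floor_count (n k : nat) : rat :=
  (count (fun p => end_height p == k%:Z - t%:Z) (P n))%:R.

Lemma floor_count0 k : floor_count 0 k = (k == t)%:R.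
Proof.
rewrite /floor_count /= /end_height big_nil addn0.
by congr (nat_of_bool _)%:R; apply/eqP/eqP; lia.
Qed.

Lemma floor_count_gt n k : (t + n < k)%N -> floor_count n k = 0.
Proof.
move=> tnk; rewrite /floor_count (@eq_in_count _ _ pred0) ?count_pred0 //.
move=> p; rewrite mem_floor_paths => /and3P[/eqP sz steps _] /=.
by have := end_height_le_size steps; rewrite sz; lia.
Qed.

Lemma floor_count_rec : floor_rec floor_count.
Proof.
move=> n k; rewrite /floor_count.
have hk : - (t%:Z) <= k%:Z - t%:Z by lia.
have hk1 : - (t%:Z) <= k.+1%:Z - t%:Z by lia.
rewrite !count_floor_pathsS // (count_gt_split end_height).
have -> : k%:Z - t%:Z + 1 = k.+1%:Z - t%:Z by lia.
have -> : k.+1%:Z - t%:Z - 1 = k%:Z - t%:Z by lia.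
have -> : count (fun p => end_height p == k%:Z - t%:Z - 1) (P n) =
          (if k is k'.+1 then count (fun p => end_height p == (k'%:Z - t%:Z)%R) (P n) else 0)%N.
  case: k {hk hk1} => [|k]; last by apply: eq_count => p; congr (_ == _); lia.
  apply/eqP; rewrite -leqn0 leqNgt -has_count; apply/hasP => -[p pin /eqP].
  by have := allP (floor_paths_above n) p pin => /=; lia.
by case: k {hk hk1} => [|k]; rewrite /lag !natrD; ring.
Qed.
End FloorCount.

Definition floor_gf (R : pzRingType) (t : nat) (v u e : R) (k : nat) : R :=
  u ^+ 2 * (1 + v + v ^+ 2) * e * scaled_floor_gf t v u k.

Lemma floor_gf_rec (R : comPzRingType) (t : nat) (v u e z : R) k :
  u * (1 + v) = 1 -> e * (1 - v) = 1 -> z * (1 + v + v ^+ 2) = v ->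
  let A := floor_gf t v u e in
  A k - A k.+1 = ((k == t)%:R - (k.+1 == t)%:R) + z * (lag A k - A k + A k.+1).
Proof.
move=> vu ve zw A; have := scaled_floor_gf_rec t vu k.
have -> : lag A k = u ^+ 2 * (1 + v + v ^+ 2) * e * lag (scaled_floor_gf t v u) k.
  by case: k => [|k] /=; rewrite ?mulr0.
rewrite /A /floor_gf; move: (scaled_floor_gf t v u k) (scaled_floor_gf t v u k.+1).
move: (lag _ k) ((k == t)%:R - (k.+1 == t)%:R : R) => b0 d b b' rec.
apply/eqP; rewrite -subr_eq0; apply/eqP.
transitivity (u ^+ 2 * e * ((1 + v + v ^+ 2) * (b - b') - v * (b0 - b + b')
                            - d * (1 + v) ^+ 2 * (1 - v))
              + u ^+ 2 * e * (v - z * (1 + v + v ^+ 2)) * (b0 - b + b')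
              + d * ((u * (1 + v)) ^+ 2 * (e * (1 - v)) - 1)); first by ring.
by rewrite rec zw vu ve expr1n !subrr; ring.
Qed.

Section FloorSeries.
Variables (t : nat) (v : fps).
Hypothesis v0 : v 0%N = 0.
Hypothesis X_v : fX = v * finv (1 + v + v ^+ 2).

Definition floor_series (k : nat) : fps := floor_gf t v (finv (1 + v)) (finv (1 - v)) k.

Lemma coef0_1Dv : (1 + v) 0%N = 1. Proof. by rewrite coefD v0 coef1 addr0. Qed.
Lemma coef0_1Bv : (1 - v) 0%N = 1. Proof. by rewrite coefB v0 coef1 subr0. Qed.
Lemma coef0_w : (1 + v + v ^+ 2) 0%N = 1.
Proof. by rewrite !coefD coef0X v0 coef1 expr0n /= !addr0. Qed.

Lemma floor_series_rec : floor_rec (fun n k => floor_series k n).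
Proof.
have vu : finv (1 + v) * (1 + v) = 1 by rewrite mul_finvf // coef0_1Dv oner_neq0.
have ve : finv (1 - v) * (1 - v) = 1 by rewrite mul_finvf // coef0_1Bv oner_neq0.
have zw : fX * (1 + v + v ^+ 2) = v by rewrite X_v -mulrA mul_finvf ?mulr1 // coef0_w oner_neq0.
move=> n k; have := congr1 (fun f : fps => f n.+1) (floor_gf_rec t k vu ve zw).
have -> : lag (fun k => floor_series k n) k = lag floor_series k n by case: k.
rewrite /= !coefD !coefN coefXM !coefD !coefN !coef_natS.
by rewrite -/(floor_series _) -/(floor_series _) => rec; lra.
Qed.

Lemma floor_series0 k : floor_series k 0%N = (k == t)%:R.
Proof.
rewrite /floor_series /floor_gf !coef0M coef0X /finv /= coef0_w coef0_1Dv coef0_1Bv.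
rewrite invr1 expr1n !mul1r; have [tk|kt] := leqP t k.
  rewrite scaled_floor_gf_high // coef0M coef0X coef0M v0 mul0r coefB coef0X v0.
  by rewrite coef1 exprS mul0r subr0 mulr1 expr0n subn_eq0 eqn_leq tk andbT.
by rewrite scaled_floor_gf_low // !coef0M v0 mulr0 mul0r ltn_eqF.
Qed.

Lemma floor_series_gt n k : (t + n < k)%N -> floor_series k n = 0.
Proof.
move=> tnk; rewrite /floor_series /floor_gf scaled_floor_gf_high; last by lia.
rewrite mulrCA mulrC; apply: (@coefM_lt _ _ (k - t)%N); last by lia.
by move=> j jlt; apply: coefX_lt; rewrite // coef0M v0 mul0r.
Qed.

Lemma floor_series_low j : (j < t)%N ->
  floor_series (t - j.+1) = (1 + v) ^+ j.+1 * finv (1 + v) ^+ 2 *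
    (1 - v ^+ (t - j)) * v * (1 + v + v ^+ 2) * finv (1 - v).
Proof.
move=> jt; rewrite /floor_series /floor_gf scaled_floor_gf_low; last by lia.
have -> : (t - (t - j.+1) = j.+1)%N by lia.
have -> : ((t - j.+1).+1 = t - j)%N by lia.
by ring.
Qed.

Lemma floor_series_high m : floor_series (m + t) =
  v ^+ m * (1 - v ^+ t.+2) * (1 + v + v ^+ 2) * finv ((1 - v) * (1 + v) ^+ m.+2).
Proof.
have unit1Dv : (1 + v) 0%N != 0 by rewrite coef0_1Dv oner_neq0.
have unit1Bv : (1 - v) 0%N != 0 by rewrite coef0_1Bv oner_neq0.
rewrite finvM ?finvX // ?coef0X ?expf_neq0 //.
rewrite /floor_series /floor_gf scaled_floor_gf_high ?leq_addl // addnK.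
by rewrite exprMn !exprS; ring.
Qed.

Lemma floor_count_series n k : floor_count t n k = floor_series k n.
Proof.
apply: (floor_rec_uniq (b := t) (floor_count_rec t) floor_series_rec).
- by move=> j; rewrite floor_count0 floor_series0.
- exact: floor_count_gt.
- by move=> ? ?; apply: floor_series_gt.
Qed.
End FloorSeries.

Lemma size_deutsch_paths t i n (s : seq (seq int)) : uniq s ->
  (forall p, (p \in s) = deutsch_path t i n p) ->
  size s = count (fun p => end_height p == i) (floor_paths t n).
Proof.
move=> s_uniq mem_s; rewrite -size_filter; apply/perm_size/uniq_perm => //.
  by rewrite filter_uniq // uniq_floor_paths.
move=> p; rewrite mem_s mem_filter mem_floor_paths /deutsch_path /floor_path.
have [<-|] := eqVneq (size p) n; last by rewrite andbF.
by rewrite height_size; case: (end_height p == i); rewrite ?andbF ?andbT.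
Qed.

Theorem theorem6 (t : nat) (i : int) (c : nat -> nat) (v : fps) :
  - (t%:Z) <= i ->
  (* c n = number of Deutsch paths of n steps from (0,0) to (n,i)
     never going below level -t *)
  (forall n : nat, exists s : seq (seq int),
      [/\ uniq s, forall p, (p \in s) = deutsch_path t i n p & size s = c n]) ->
  (* v(0) = 0 and z = v / (1 + v + v^2) *)
  v 0%N = 0 ->
  fX = fdiv v (fadd (fadd fone v) (fpow v 2)) ->
  let Phi : fps := fun n => (c n)%:R in
  let w : fps := fadd (fadd fone v) (fpow v 2) in
  (i < 0 ->
     forall n, Phi n =
       fdiv (fmul (fmul (fmul (fpowz (fadd fone v) (- i - 2))
                               (fsub fone (fpowz v (i + t%:Z + 1)))) v) w)
            (fsub fone v) n) /\
  (0 <= i ->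
     forall n, Phi n =
       fdiv (fmul (fmul (fpowz v i) (fsub fone (fpow v t.+2))) w)
            (fmul (fsub fone v) (fpowz (fadd fone v) (i + 2))) n).
Proof.
move=> ti c_paths v0 X_v Phi w; rewrite fpowE in X_v.
have Phi_series n : Phi n = floor_series t v (absz (i + t%:Z)) n.
  rewrite /Phi; have [s [s_uniq mem_s <-]] := c_paths n.
  rewrite (size_deutsch_paths s_uniq mem_s) -floor_count_series // /floor_count.
  by congr (_%:R); apply: eq_count => p; congr (_ == _); lia.
rewrite /w !fpowE; split => [i_neg | i_nonneg] n; rewrite Phi_series.
  have [j ij] : exists j, i = Negz j by case: (i) i_neg => // j; exists j.
  subst i; move: ti; rewrite NegzE => ti.
  have -> : Negz j + t%:Z + 1 = (t - j)%N by rewrite NegzE; lia.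
  have -> : absz (Negz j + t%:Z) = (t - j.+1)%N by rewrite NegzE; lia.
  have unit1Dv : (1 + v) 0%N != 0 by rewrite coef0_1Dv ?oner_neq0.
  by rewrite fpowzB // fpowz_nat floor_series_low //; lia.
have [m ->] : exists m : nat, i = m by case: (i) i_nonneg => // m; exists m.
have -> : m%:Z + 2 = m.+2 by lia.
have -> : absz (m%:Z + t%:Z) = (m + t)%N by lia.
by rewrite !fpowz_nat floor_series_high.
Qed.
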